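(* Let $\omega\in\Omega_0$, $N\ge2$, and let $\boldsymbol u=(\boldsymbol u(1),\dots,\boldsymbol u(N))$, $\boldsymbol u(j)=(a(j),b(j))^{\mathsf T}$, be an eigenvector of $\mathcal S_\omega|_{[1,N]}$ with eigenvalue $z$. (i) If $z\neq V_{22,\omega}(j)$ for all $j\in[1,N]$, then $a(1)a(N)\neq0$; if $z=V_{22,\omega}(1)$, then $a(N)\neq0$; if $z=V_{22,\omega}(N)$, then $a(1)\neq0$. Moreover, if $z\neq V_{22,\omega}(j)$ for all $j\in[2,N-1]$, then $z$ is a simple eigenvalue. (ii) If $z=V_{22,\omega}(m)$ for some $m\in[2,N-1]$, then the multiplicity of $z$ does not exceed $2$; if the multiplicity is $2$, then there exists an eigenvector whose component $a(N)$ is nonzero and there exists an eigenvector whose component $a(N)$ is zero.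
   Context: $(\Omega,\mathcal F,\nu,T)$ is ergodic and $f=(f_{ij}):\Omega\to M(2,\mathbb C)$ bounded measurable with self-adjoint values; $V_\omega(n)=f(T^n\omega)$ with entries $V_{ij,\omega}(n)$, and $J=\begin{pmatrix}1&0\\0&0\end{pmatrix}$. $\Omega_0$ is the set of $\omega\in\Omega$ such that $V_{12,\omega}(i)\neq0$ for all $i\in\mathbb Z$ and $V_{22,\omega}(i)\neq V_{22,\omega}(j)$ for all $i\neq j$. $\mathcal S_\omega|_{[1,N]}$ is the $2N\times2N$ block tridiagonal Hermitian matrix with diagonal blocks $V_\omega(1),\dots,V_\omega(N)$ and all off-diagonal blocks equal to $J$ (the restriction of $(\mathcal S_\omega\boldsymbol u)(n)=J\boldsymbol u(n+1)+J\boldsymbol u(n-1)+V_\omega(n)\boldsymbol u(n)$ to $[1,N]$ with Dirichlet boundary conditions). *)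

From HB Require Import structures.
From mathcomp Require Import all_boot all_order all_algebra.
From mathcomp Require Import sesquilinear.
Set Implicit Arguments. Unset Strict Implicit. Unset Printing Implicit Defensive.
Import Order.TTheory GRing.Theory Num.Theory.
Local Open Scope ring_scope.

(* Entry (k,l) of a 2x2 matrix, 0-based: k,l in {0,1}.
   Hence V_{12} = ent2 V 0 1 and V_{22} = ent2 V 1 1. *)
Definition ent2 (C : numClosedFieldType) (A : 'M[C]_2) (k l : nat) : C :=
  A (inord k) (inord l).

Definition Tpow (Omega : Type) (T Tinv : Omega -> Omega) (n : int) (w : Omega)
  : Omega :=
  match n with
  | Posz m => iter m T w
  | Negz m => iter m.+1 Tinv w
  end.

Definition Vom (C : numClosedFieldType) (Omega : Type) (T Tinv : Omega -> Omega)
  (f : Omega -> 'M[C]_2) (w : Omega) (n : int) : 'M[C]_2 :=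
  f (Tpow T Tinv n w).

Definition Omega0 (C : numClosedFieldType) (Omega : Type) (T Tinv : Omega -> Omega)
  (f : Omega -> 'M[C]_2) (w : Omega) : Prop :=
  (forall i : int, ent2 (Vom T Tinv f w i) 0 1 != 0) /\
  (forall i j : int, i != j ->
     ent2 (Vom T Tinv f w i) 1 1 != ent2 (Vom T Tinv f w j) 1 1).

(* Index p (0-based) corresponds to site p %/ 2 + 1 in [1,N] and
   component p %% 2 (0 = a, 1 = b).  Diagonal blocks V(1),...,V(N),
   off-diagonal (nearest neighbour) blocks J = diag(1,0), else 0. *)
Definition Smat (C : numClosedFieldType) (N : nat) (V : int -> 'M[C]_2)
  : 'M[C]_(N * 2) :=
  \matrix_(p, q)
    (if (p %/ 2 == q %/ 2)%N then
       ent2 (V (p %/ 2).+1%N%:Z) (p %% 2)%N (q %% 2)%N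
     else if (((p %/ 2).+1 == q %/ 2) || ((q %/ 2).+1 == p %/ 2))%N then
       (if ((p %% 2 == 0) && (q %% 2 == 0))%N then 1 else 0)
     else 0).

Definition coord_at (C : numClosedFieldType) (n : nat) (v : 'cV[C]_n) (p : nat)
  : C :=
  if insub p is Some i then v i 0 else 0.

(* u = (u(1),...,u(N)), u(j) = (a(j), b(j))^T ; j in [1,N] *)
Definition acomp (C : numClosedFieldType) (N : nat) (v : 'cV[C]_(N * 2)) (j : nat)
  : C := coord_at v (j.-1 * 2)%N.
Definition bcomp (C : numClosedFieldType) (N : nat) (v : 'cV[C]_(N * 2)) (j : nat)
  : C := coord_at v (j.-1 * 2 + 1)%N.

Definition is_eigvec (C : numClosedFieldType) (n : nat) (A : 'M[C]_n) (z : C)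
  (v : 'cV[C]_n) : Prop :=
  v != 0 /\ A *m v = z *: v.

(* (geometric) multiplicity of z as an eigenvalue of A: the dimension of
   {v column | A v = z v}.  mxalgebra's eigenspace works with row vectors
   (u *m B = z u), so we apply it to A^T. For Hermitian A it coincides with
   the algebraic multiplicity. *)
Definition eigmult (C : numClosedFieldType) (n : nat) (A : 'M[C]_n) (z : C) : nat :=
  \rank (eigenspace A^T z).

From HB Require Import structures.
From mathcomp Require Import all_boot all_order all_algebra.
From mathcomp Require Import sesquilinear.
From mathcomp Require Import zify ring.
Import Order.TTheory GRing.Theory Num.Theory.
Local Open Scope ring_scope.
Set Implicit Arguments. Unset Strict Implicit. Unset Printing Implicit Defensive.

(** Write an eigenvector as u(j) = (a(j), b(j)), 1 <= j <= N, and put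
    a(0) = a(N+1) = 0.  At a site j, the second row of the eigenvalue equation,
    V21(j) a(j) + V22(j) b(j) = z b(j), gives b(j) = 0 as soon as a(j) = 0 and
    z <> V22(j); the first row, a(j-1) + a(j+1) + V11(j) a(j) + V12(j) b(j)
    = z a(j), then turns a(j-1) = a(j) = 0 into a(j+1) = 0.  As the V22(j) are
    pairwise distinct, z equals at most one of them, V22(m) say.  A zero of a
    at an end of [1, N] thus propagates up to the site m (propagation from the
    right is propagation from the left for the reflected chain j |-> N+1-j),
    and at m the first row together with V12(m) <> 0 forces b(m) = 0.  Hence an
    eigenvector vanishes once a(1) = a(N) = 0, and already once one of them
    vanishes if m is an end of [1, N] or does not exist: the eigenspace embeds
    into C^2, resp. C, through these coordinates, which yields the bounds on
    the multiplicity and the eigenvectors of (ii). *)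

Definition eigen_recurrence (C : numClosedFieldType) (N : nat)
  (V : nat -> 'M[C]_2) (z : C) (a b : nat -> C) : Prop :=
  [/\ a 0%N = 0, a N.+1 = 0 &
      forall j, (0 < j <= N)%N ->
        a j.-1 + a j.+1 + ent2 (V j) 0 0 * a j + ent2 (V j) 0 1 * b j = z * a j
        /\ ent2 (V j) 1 0 * a j + ent2 (V j) 1 1 * b j = z * b j].

Lemma eigen_recurrence_rev (C : numClosedFieldType) N V z (a b : nat -> C) :
  eigen_recurrence N V z a b ->
  eigen_recurrence N (fun j => V (N.+1 - j)%N) z
    (fun j => a (N.+1 - j)%N) (fun j => b (N.+1 - j)%N).
Proof.
case=> a0 aN eqs; split.
- by rewrite subn0.
- by rewrite subnn.
move=> j jN.
have [|eq_a eq_b] := eqs (N.+1 - j)%N; first by lia.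
have -> : (N.+1 - j.-1 = (N.+1 - j).+1)%N by lia.
have -> : (N.+1 - j.+1 = (N.+1 - j).-1)%N by lia.
by rewrite [a _ + a _]addrC.
Qed.

Section Propagation.

Variables (C : numClosedFieldType) (N : nat) (V : nat -> 'M[C]_2) (z : C).
Variables (a b : nat -> C).
Hypothesis eqs : eigen_recurrence N V z a b.

Lemma eigen_recurrence_b_eq0 j :
  (0 < j <= N)%N -> z != ent2 (V j) 1 1 -> a j = 0 -> b j = 0.
Proof.
case: eqs => _ _ /(_ j) eqs_j jN zV aj; have [_] := eqs_j jN.
rewrite aj mulr0 add0r => /eqP; rewrite -subr_eq0 -mulrBl mulf_eq0 subr_eq0.
by rewrite eq_sym (negPf zV) => /eqP.
Qed.

Lemma eigen_recurrence_a_eq0_left m :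
  (m <= N.+1)%N -> a 1 = 0 -> (forall j, (0 < j < m)%N -> z != ent2 (V j) 1 1) ->
  forall j, (j <= m)%N -> a j = 0.
Proof.
case: (eqs) => a0 _ eqs_a mN a1 zV.
have a_pair k : (k < m)%N -> a k = 0 /\ a k.+1 = 0.
  elim: k => [//|k IH] km; have [ak ak1] := IH (ltnW km); split=> //.
  have kN : (0 < k.+1 <= N)%N by lia.
  have bk1 : b k.+1 = 0 by apply: eigen_recurrence_b_eq0 kN _ ak1; apply: zV; lia.
  have [+ _] := eqs_a _ kN.
  by rewrite /= ak ak1 bk1 !mulr0 !addr0 add0r.
by case=> [//|j] jm; have [] := a_pair j jm.
Qed.

End Propagation.

Lemma eigen_recurrence_a_eq0_right (C : numClosedFieldType) N V z (a b : nat -> C) m :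
  eigen_recurrence N V z a b ->
  (0 < m)%N -> a N = 0 -> (forall j, (m < j <= N)%N -> z != ent2 (V j) 1 1) ->
  forall j, (m <= j <= N.+1)%N -> a j = 0.
Proof.
move=> eqs m_gt0 aN zV j /andP[mj jN].
have := eigen_recurrence_a_eq0_left (eigen_recurrence_rev eqs) (m := (N.+1 - m)%N).
rewrite subSS subn0 => /(_ _ aN _ (N.+1 - j)%N); rewrite subKn //; apply; try lia.
by move=> i im; apply: zV; lia.
Qed.

Lemma eigen_recurrence_eq0 (C : numClosedFieldType) N V z (a b : nat -> C) m :
  eigen_recurrence N V z a b -> (1 < N)%N -> (0 < m <= N)%N ->
  (forall j, (0 < j <= N)%N -> ent2 (V j) 0 1 != 0) ->
  (forall j, (0 < j <= N)%N -> j != m -> z != ent2 (V j) 1 1) ->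
  (m = 1%N \/ a 1 = 0) -> (m = N \/ a N = 0) ->
  forall j, (0 < j <= N)%N -> a j = 0 /\ b j = 0.
Proof.
move=> eqs N_gt1 mN V12 zV a1_or aN_or.
have a_left := eigen_recurrence_a_eq0_left eqs (m := m).
have a_right := eigen_recurrence_a_eq0_right eqs (m := m).
have zV_left j : (0 < j < m)%N -> z != ent2 (V j) 1 1 by move=> jm; apply: zV; lia.
have zV_right j : (m < j <= N)%N -> z != ent2 (V j) 1 1 by move=> jm; apply: zV; lia.
have [a1 aN] : a 1 = 0 /\ a N = 0.
  case: a1_or aN_or => [m1|a1] [mN'|aN] //; first lia.
  - by split=> //; apply: a_right => //; lia.
  - by split=> //; apply: a_left => //; lia.
have a_eq0 j : (j <= N.+1)%N -> a j = 0.
  move=> jN; case: (leqP j m) => jm; [apply: a_left | apply: a_right] => //; lia.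
move=> j jN; split; first by apply: a_eq0; lia.
have [->|jm] := eqVneq j m; last first.
  by apply: (eigen_recurrence_b_eq0 eqs jN (zV _ jN jm)); apply: a_eq0; lia.
case: eqs => _ _ /(_ m mN) [+ _].
rewrite !a_eq0 ?mulr0 ?addr0 ?add0r; try lia.
by move/eqP; rewrite mulf_eq0 (negPf (V12 _ mN)) => /eqP.
Qed.

Lemma sum_nat_pairs (R : nmodType) n (G : nat -> R) :
  \sum_(0 <= q < n * 2) G q = \sum_(0 <= k < n) (G (k * 2)%N + G (k * 2 + 1)%N).
Proof.
elim: n => [|n IH]; first by rewrite !big_nil.
rewrite [RHS]big_nat_recr //= -IH mulSn.
have -> : (2 + n * 2 = (n * 2).+1.+1)%N by lia.
by rewrite !big_nat_recr //= -addrA addn1.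
Qed.

Lemma sum_nat_delta (R : nmodType) n i (F : nat -> R) :
  \sum_(0 <= k < n) (if k == i then F k else 0) = if (i < n)%N then F i else 0.
Proof. by rewrite -big_mkcond big_nat1_eq. Qed.

Section Coordinates.

Variable C : numClosedFieldType.

Lemma coord_atE n (v : 'cV[C]_n) (p : 'I_n) : coord_at v p = v p 0.
Proof. by rewrite /coord_at valK. Qed.

Lemma coord_at_out n (v : 'cV[C]_n) p : (n <= p)%N -> coord_at v p = 0.
Proof. by move=> np; rewrite /coord_at insubF // ltnNge np. Qed.

Lemma coord_atZ n (v : 'cV[C]_n) z p : coord_at (z *: v) p = z * coord_at v p.
Proof. by rewrite /coord_at; case: insub => [i|]; rewrite ?mxE ?mulr0. Qed.

(* Unlike [acomp u 0], which repeats a(1), this is the Dirichlet value a(0) = 0. *)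
Definition aseq N (u : 'cV[C]_(N * 2)) (j : nat) : C :=
  if j is 0%N then 0 else acomp u j.

Lemma aseqE N (u : 'cV[C]_(N * 2)) j : (0 < j)%N -> aseq u j = acomp u j.
Proof. by case: j. Qed.

Lemma acomp_bcomp_eq0 N (u : 'cV[C]_(N * 2)) :
  (forall j, (0 < j <= N)%N -> acomp u j = 0 /\ bcomp u j = 0) -> u = 0.
Proof.
move=> u0; apply/matrixP => q c; rewrite (ord1 c) !mxE -coord_atE.
have [|a0 b0] := u0 (q %/ 2).+1; first by have := ltn_ord q; lia.
have [q_even|q_odd] : (q = q %/ 2 * 2 :> nat \/ q = q %/ 2 * 2 + 1 :> nat)%N by lia.
- by rewrite q_even.
- by rewrite q_odd.
Qed.

End Coordinates.

Section SmatMul.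

Variables (C : numClosedFieldType) (V : int -> 'M[C]_2).

Definition smat_entry (p q : nat) : C :=
  if (p %/ 2 == q %/ 2)%N then ent2 (V (p %/ 2).+1%N%:Z) (p %% 2)%N (q %% 2)%N
  else if (((p %/ 2).+1 == q %/ 2) || ((q %/ 2).+1 == p %/ 2))%N then
    (if ((p %% 2 == 0) && (q %% 2 == 0))%N then 1 else 0)
  else 0.

Lemma SmatE N (p q : 'I_(N * 2)) : Smat N V p q = smat_entry p q.
Proof. by rewrite mxE. Qed.

Lemma smat_entry_sites i k r s : (r < 2)%N -> (s < 2)%N ->
  smat_entry (i * 2 + r) (k * 2 + s) =
  if i == k then ent2 (V i.+1%:Z) r s
  else if (i.+1 == k) || (k.+1 == i) then
    (if (r == 0) && (s == 0) then 1 else 0)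
  else 0.
Proof.
move=> r2 s2; rewrite /smat_entry.
have -> : ((i * 2 + r) %/ 2 = i)%N by lia.
have -> : ((k * 2 + s) %/ 2 = k)%N by lia.
have -> : ((i * 2 + r) %% 2 = r)%N by lia.
by have -> : ((k * 2 + s) %% 2 = s)%N by lia.
Qed.

Lemma smat_entry_pair i k r x y : (r < 2)%N ->
  smat_entry (i * 2 + r) (k * 2) * x + smat_entry (i * 2 + r) (k * 2 + 1) * y =
  (if k == i then ent2 (V i.+1%:Z) r 0 * x + ent2 (V i.+1%:Z) r 1 * y else 0) +
  (if r == 0 then (if k == i.+1 then x else 0) + (if k.+1 == i then x else 0)
   else 0).
Proof.
move=> r2; rewrite -{1}[(k * 2)%N]addn0 !smat_entry_sites // [i == k]eq_sym.
have [->|_] := eqVneq k i.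
  by rewrite (gtn_eqF (ltnSn i)) (ltn_eqF (ltnSn i)) addr0 if_same addr0.
rewrite [i.+1 == k]eq_sym /= andbT andbF if_same mul0r addr0 add0r.
case: (r == 0); last by rewrite if_same mul0r.
have [e1|_] := eqVneq k i.+1; have [e2|_] := eqVneq k.+1 i;
  rewrite /= ?mul1r ?mul0r ?addr0 ?add0r //; lia.
Qed.

Lemma coord_at_Smat_mul N (u : 'cV[C]_(N * 2)) i r : (i < N)%N -> (r < 2)%N ->
  coord_at (Smat N V *m u) (i * 2 + r) =
  ent2 (V i.+1%:Z) r 0 * acomp u i.+1 + ent2 (V i.+1%:Z) r 1 * bcomp u i.+1 +
  (if r == 0 then aseq u i + acomp u i.+2 else 0).
Proof.
move=> iN r2; have p_lt : (i * 2 + r < N * 2)%N by lia.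
rewrite (coord_atE _ (Ordinal p_lt)) mxE.
under eq_bigr do rewrite SmatE -coord_atE.
rewrite -(big_mkord xpredT (fun q => smat_entry _ q * coord_at u q)) sum_nat_pairs.
under eq_bigr do rewrite smat_entry_pair //.
rewrite big_split /= sum_nat_delta iN; congr (_ + _).
case: (r == 0); last by rewrite big1.
rewrite big_split /= sum_nat_delta addrC; congr (_ + _); last first.
  by case: ifP => // /negbT; rewrite -leqNgt => Ni; rewrite /acomp coord_at_out //; lia.
case: i iN {p_lt} => [|i] iN; first by rewrite big1.
under eq_bigr do rewrite eqSS.
by rewrite sum_nat_delta ltnW.
Qed.

Lemma Smat_eigen_recurrence N (u : 'cV[C]_(N * 2)) z :
  Smat N V *m u = z *: u ->
  eigen_recurrence N (fun j => V j%:Z) z (aseq u) (bcomp u).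
Proof.
move=> Su; split=> //; first by rewrite /= /acomp coord_at_out.
case=> [//|i] /andP[_ iN]; split.
- have := coord_at_Smat_mul u iN (ltn0Sn 1).
  rewrite Su coord_atZ addn0 /= => Su_a.
  by rewrite -[RHS]/(z * coord_at u (i * 2)) Su_a; ring.
- have := coord_at_Smat_mul u iN (ltnSn 1).
  by rewrite Su coord_atZ addr0 /= => ->.
Qed.

End SmatMul.

Section ColumnEigenspace.

Variables (F : fieldType) (n : nat) (A : 'M[F]_n) (z : F).

Lemma eigenspace_trP (v : 'cV_n) :
  reflect (A *m v = z *: v) (v^T <= eigenspace A^T z)%MS.
Proof.
apply: (iffP eigenspaceP) => Av; last by rewrite -trmx_mul Av linearZ.
by apply: trmx_inj; rewrite trmx_mul Av linearZ.
Qed.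

Lemma eigenspace_tr_rank_gt0 (v : 'cV_n) :
  v != 0 -> A *m v = z *: v -> (0 < \rank (eigenspace A^T z))%N.
Proof.
move=> v0 /eigenspace_trP/mxrankS; rewrite rank_rV trmx_eq0 v0.
exact: leq_trans.
Qed.

Lemma eigenspace_tr_vanishing k (qs : 'I_k -> 'I_n) :
  (k < \rank (eigenspace A^T z))%N ->
  exists2 v : 'cV_n, v != 0 & A *m v = z *: v /\ forall j, v (qs j) 0 = 0.
Proof.
set E := eigenspace A^T z => k_lt; pose P : 'M[F]_(n, k) := colsub qs 1%:M.
have : (E :&: kermx P)%MS != 0.
  rewrite -mxrank_eq0 -lt0n; have := mxrank_mul_ker E P.
  have := rank_leq_col (E *m P); lia.
case/rowV0Pn=> x; rewrite sub_capmx => /andP[xE /sub_kermxP xP] x0.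
exists x^T; first by rewrite trmx_eq0.
split; first by apply/eigenspace_trP; rewrite trmxK.
move=> j; move/matrixP/(_ 0 j): xP.
by rewrite /P mulmx_colsub mulmx1 !mxE.
Qed.

Lemma eigenspace_tr_rank_le k (qs : 'I_k -> 'I_n) :
  (forall v : 'cV_n, A *m v = z *: v -> (forall j, v (qs j) 0 = 0) -> v = 0) ->
  (\rank (eigenspace A^T z) <= k)%N.
Proof.
move=> vq_inj; rewrite leqNgt; apply/negP => /(eigenspace_tr_vanishing qs).
by case=> v v0 [Av vq]; rewrite (vq_inj v Av vq) eqxx in v0.
Qed.

End ColumnEigenspace.

Section Resonance.

Variables (C : numClosedFieldType) (N : nat) (V : int -> 'M[C]_2) (z : C).
Hypothesis N_gt1 : (1 < N)%N.
Hypothesis V12_neq0 : forall j : nat, ent2 (V j) 0 1 != 0.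
Hypothesis V22_inj : forall i j : nat, i != j -> ent2 (V i) 1 1 != ent2 (V j) 1 1.

Local Notation S := (Smat N V).
Local Notation V22 j := (ent2 (V (Posz j)) 1 1).

Lemma Smat_eigvec_eq0 m u :
  (0 < m <= N)%N -> (forall j, (0 < j <= N)%N -> j != m -> z != V22 j) ->
  S *m u = z *: u -> (m = 1%N \/ acomp u 1 = 0) -> (m = N \/ acomp u N = 0) ->
  u = 0.
Proof.
move=> mN zV Su a1_or aN_or; apply: acomp_bcomp_eq0 => j jN.
have aseqN : aseq u N = acomp u N by rewrite aseqE //; lia.
rewrite -aseqE; last by case/andP: jN.
apply: (eigen_recurrence_eq0 (Smat_eigen_recurrence Su) N_gt1 mN
  (fun i _ => V12_neq0 i) zV a1_or) => //.
by rewrite aseqN.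
Qed.

Lemma resonant_eigvec_eq0 m u :
  (0 < m <= N)%N -> z = V22 m ->
  S *m u = z *: u -> (m = 1%N \/ acomp u 1 = 0) -> (m = N \/ acomp u N = 0) ->
  u = 0.
Proof.
move=> mN zm; apply: Smat_eigvec_eq0 => // j _ jm.
by rewrite zm eq_sym; apply: V22_inj.
Qed.

Let first_a_lt : (0 < N * 2)%N. Proof. lia. Qed.
Let last_a_lt : (N.-1 * 2 < N * 2)%N. Proof. lia. Qed.
Let first_a := Ordinal first_a_lt.
Let last_a := Ordinal last_a_lt.

Let first_aE (v : 'cV[C]_(N * 2)) : v first_a 0 = acomp v 1.
Proof. by rewrite -coord_atE. Qed.

Let last_aE (v : 'cV[C]_(N * 2)) : v last_a 0 = acomp v N.
Proof. by rewrite -coord_atE. Qed.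

Lemma nonresonant_acomp_ends u :
  is_eigvec S z u -> (forall j, (1 <= j <= N)%N -> z != V22 j) ->
  acomp u 1 * acomp u N != 0.
Proof.
case=> u0 Su zV; rewrite mulf_eq0 negb_or.
apply/andP; split; apply: contra u0 => /eqP a0; apply/eqP.
- by apply: (Smat_eigvec_eq0 (m := N)) => //;
    [lia | move=> j jN _; apply: zV | right | left].
- by apply: (Smat_eigvec_eq0 (m := 1)) => //;
    [lia | move=> j jN _; apply: zV | left | right].
Qed.

Lemma resonant_first_acomp_last u : is_eigvec S z u -> z = V22 1 -> acomp u N != 0.
Proof.
case=> u0 Su z1; apply: contra u0 => /eqP aN; apply/eqP.
by apply: (resonant_eigvec_eq0 (m := 1)) => //; [lia | left | right].
Qed.

Lemma resonant_last_acomp_first u : is_eigvec S z u -> z = V22 N -> acomp u 1 != 0.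
Proof.
case=> u0 Su zN; apply: contra u0 => /eqP a1; apply/eqP.
by apply: (resonant_eigvec_eq0 (m := N)) => //; [lia | right | left].
Qed.

Lemma eigmult_eq1 u :
  is_eigvec S z u -> (forall j, (2 <= j <= N.-1)%N -> z != V22 j) ->
  eigmult S z = 1%N.
Proof.
case=> u0 Su zV; apply/eqP; rewrite eqn_leq /eigmult (eigenspace_tr_rank_gt0 u0 Su).
rewrite andbT; have [z1|z1] := eqVneq z (V22 1).
  apply: (eigenspace_tr_rank_le (qs := fun _ : 'I_1 => last_a)) => v Sv /(_ ord0).
  rewrite last_aE => aN.
  by apply: (resonant_eigvec_eq0 (m := 1)) => //; [lia | left | right].
apply: (eigenspace_tr_rank_le (qs := fun _ : 'I_1 => first_a)) => v Sv /(_ ord0).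
rewrite first_aE => a1.
apply: (Smat_eigvec_eq0 (m := N)) => //; [lia | | by right | by left].
by case=> [|[|j]] // jN jm; apply: zV; lia.
Qed.

Lemma resonant_eigmult_le2 m :
  (2 <= m <= N.-1)%N -> z = V22 m -> (eigmult S z <= 2)%N.
Proof.
move=> mN zm.
pose a_ends (j : 'I_2) := if j == 0 then first_a else last_a.
apply: (eigenspace_tr_rank_le (qs := a_ends)) => v Sv vq.
have := vq 0; have := vq 1; rewrite /= first_aE last_aE => aN a1.
by apply: (resonant_eigvec_eq0 (m := m)) => //; [lia | right | right].
Qed.

Lemma eigvec_acomp_last_eq0 :
  (1 < eigmult S z)%N -> exists v, is_eigvec S z v /\ acomp v N = 0.
Proof.
case/(eigenspace_tr_vanishing (fun _ : 'I_1 => last_a)) => v v0 [Sv /(_ ord0)].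
by rewrite last_aE => aN; exists v.
Qed.

Lemma resonant_eigvec_acomp_last_neq0 m :
  (2 <= m <= N.-1)%N -> z = V22 m ->
  (1 < eigmult S z)%N -> exists v, is_eigvec S z v /\ acomp v N != 0.
Proof.
move=> mN zm.
case/(eigenspace_tr_vanishing (fun _ : 'I_1 => first_a)) => v v0 [Sv /(_ ord0)].
rewrite first_aE => a1; exists v; split=> //; apply: contra v0 => /eqP aN.
by apply/eqP; apply: (resonant_eigvec_eq0 (m := m)) => //; [lia | right | right].
Qed.

End Resonance.

Theorem lemma5p7 (C : numClosedFieldType) (Omega : Type)
  (T Tinv : Omega -> Omega) (f : Omega -> 'M[C]_2)
  (hT1 : cancel T Tinv) (hT2 : cancel Tinv T)
  (hf_sa : forall x, f x \is hermsymmx)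
  (hf_bdd : exists M : C, forall x i j, `|f x i j| <= M)
  (w : Omega) (hw : Omega0 T Tinv f w)
  (N : nat) (hN : (2 <= N)%N) (z : C) (u : 'cV[C]_(N * 2))
  (hu : is_eigvec (Smat N (Vom T Tinv f w)) z u) :
  let V22 := fun j : nat => ent2 (Vom T Tinv f w j%:Z) 1 1 in
  let S := Smat N (Vom T Tinv f w) in
  (* (i) *)
  (((forall j : nat, (1 <= j <= N)%N -> z != V22 j) ->
      acomp u 1 * acomp u N != 0)
   /\ (z = V22 1%N -> acomp u N != 0)
   /\ (z = V22 N -> acomp u 1 != 0)
   /\ ((forall j : nat, (2 <= j <= N.-1)%N -> z != V22 j) ->
      eigmult S z = 1%N))
  /\
  (* (ii) *)
  (forall m : nat, (2 <= m <= N.-1)%N -> z = V22 m ->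
     (eigmult S z <= 2)%N /\
     (eigmult S z = 2%N ->
        (exists v, is_eigvec S z v /\ acomp v N != 0) /\
        (exists v, is_eigvec S z v /\ acomp v N = 0))).
Proof.
move=> V22 S.
have V12_neq0 (j : nat) : ent2 (Vom T Tinv f w j) 0 1 != 0 := hw.1 j.
have V22_inj (i j : nat) : i != j -> V22 i != V22 j.
  by move=> ij; apply: hw.2; rewrite eqz_nat.
split.
  split; first exact: (nonresonant_acomp_ends hN V12_neq0 hu).
  split; first exact: (resonant_first_acomp_last hN V12_neq0 V22_inj hu).
  split; first exact: (resonant_last_acomp_first hN V12_neq0 V22_inj hu).
  exact: (eigmult_eq1 hN V12_neq0 V22_inj hu).
move=> m mN zm; split; first exact: (resonant_eigmult_le2 hN V12_neq0 V22_inj mN).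
move=> mult2; have mult_gt1 : (1 < eigmult S z)%N by rewrite mult2.
split; first exact: (resonant_eigvec_acomp_last_neq0 hN V12_neq0 V22_inj mN).
exact: (eigvec_acomp_last_eq0 hN).
Qed.
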